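(* Let $f\in\mathcal{CM}$ with representing measure $\nu$, and let $f_e:(\omega_0,\infty)\to\mathbb{R}$ be its extension. Then $f_e\in C^\infty(\omega_0,\infty)$, and for all $m\in\mathbb{N}\cup\{0\}$ and all $\lambda>\omega_0$: \[ (-1)^m f_e^{(m)}(\lambda)\ge0\quad\text{and}\quad f_e^{(m)}(\lambda)=(-1)^m\int_{[0,\infty)}t^m e^{-\lambda t}\,\nu(dt). \] In particular $f_e(\lambda)=\int_{[0,\infty)}e^{-\lambda t}\nu(dt)$ for all $\lambda>\omega_0$.
   Context: A function $f:(0,\infty)\to\mathbb{R}$ is completely monotone, $f\in\mathcal{CM}$, if it is $C^\infty$ and $(-1)^n f^{(n)}(\lambda)\ge0$ for all $n\ge0$, $\lambda>0$; its representing measure is the unique measure $\nu$ on $[0,\infty)$ with $f(\lambda)=\int_{[0,\infty)}e^{-\lambda t}\nu(dt)$. For $n\ge0$, $f^{(n)}(0+):=\lim_{\lambda\to0+}f^{(n)}(\lambda)\in[-\infty,\infty]$. If all $f^{(n)}(0+)$ are finite, $\omega_0=\omega_0^f:=\inf\{\lambda\in\mathbb{R}:\sum_{n\ge0}\frac{f^{(n)}(0+)}{n!}\lambda^n\text{ converges}\}$; otherwise $\omega_0:=0$. The extension $f_e:(\omega_0,\infty)\to\mathbb{R}$ is $f_e(\lambda)=\sum_{n\ge0}\frac{f^{(n)}(0+)}{n!}\lambda^n$ for $\omega_0<\lambda\le0$ and $f_e(\lambda)=f(\lambda)$ for $\lambda>0$. *)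

From HB Require Import structures.
From mathcomp Require Import all_boot all_order all_algebra.
From mathcomp Require Import all_classical all_reals all_analysis.
Set Implicit Arguments. Unset Strict Implicit. Unset Printing Implicit Defensive.
Import Order.TTheory GRing.Theory Num.Theory.
Import numFieldNormedType.Exports.
Local Open Scope classical_set_scope.
Local Open Scope ring_scope.

Section Defs.
Variable R : realType.

Definition completely_monotone (f : R -> R) : Prop :=
  (forall n (x : R), 0 < x -> derivable ((derive1n n f)) x 1) /\
  (forall n (x : R), 0 < x -> 0 <= (-1) ^+ n * (derive1n n f) x).

Definition represents (f : R -> R) (nu : {measure set R -> \bar R}) : Prop :=
  forall l : R, 0 < l ->
    (f l)%:E = (\int[nu]_(t in `[0%R, +oo[) (expR (- (l * t)))%:E)%E.

Definition derivs0_finite (f : R -> R) : Prop :=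
  forall n, exists l : R, ((derive1n n f)) x @[x --> (0:R)^'+] --> l.

Definition deriv0 (f : R -> R) (n : nat) : R :=
  lim (((derive1n n f)) x @[x --> (0:R)^'+]).

Definition taylor0_term (f : R -> R) (l : R) (n : nat) : R :=
  deriv0 f n / (n`!)%:R * l ^+ n.

Definition taylor0_cvg (f : R -> R) (l : R) : Prop :=
  cvgn (series (taylor0_term f l)).

Definition omega0 (f : R -> R) : \bar R :=
  if `[< derivs0_finite f >] then
    ereal_inf [set (l%:E)%E | l in [set l : R | taylor0_cvg f l]]
  else 0%E.

(* the extension f_e; its values on (-oo, omega0] are irrelevant *)
Definition fext (f : R -> R) (l : R) : R :=
  if 0 < l then f l else limn (series (taylor0_term f l)).

End Defs.

From Pilot Require Import Defs.
From HB Require Import structures.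
From mathcomp Require Import all_boot all_order all_algebra.
From mathcomp Require Import all_classical all_reals all_analysis.
From mathcomp Require Import measurable_realfun lebesgue_integral_under.
From mathcomp Require Import ring lra.
Import Order.TTheory GRing.Theory Num.Theory.
Import numFieldNormedType.Exports.
Local Open Scope classical_set_scope.
Local Open Scope ring_scope.
Set Implicit Arguments. Unset Strict Implicit.

(* The moment transforms G_m(l) = \int t^m e^{-l t} nu(dt) ([moment_laplace]) are finite if
   e^{-l' t} is nu-integrable for some l' < l, because t^m e^{-(l - l') t} is at most
   m! / (l - l')^m.  Differentiating under the integral gives G_m' = - G_(m+1), so any
   function agreeing with G_0 on a ray (a, oo) of integrability has m-th derivative
   (-1)^m G_m there.  On (0, oo) this applies to f, and monotone convergence as l -> 0+
   identifies (-1)^n f^(n)(0+) with the n-th moment of nu.  For l <= 0, Tonelli expands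
   \int e^{-l t} nu(dt) into the Taylor series of f at 0, whose terms are then
   nonnegative: convergence of that series at some l' < l makes e^{-l' t}, hence e^{-l t},
   integrable and gives f_e(l) = G_0(l). *)

Lemma lte_EFin_dense (R : realType) (a : \bar R) (l : R) :
  (a < l%:E)%E -> exists2 l', (a < l'%:E)%E & l' < l.
Proof.
case: a => [r| |] //=.
- by rewrite lte_fin => rl; exists ((r + l) / 2); rewrite ?lte_fin; lra.
- by move=> _; exists (l - 1); [exact: ltNyr | lra].
Qed.

Lemma near_lte_EFin (R : realType) (a : \bar R) (l : R) :
  (a < l%:E)%E -> \forall x \near l, (a < x%:E)%E.
Proof.
move=> /lte_EFin_dense[l' al' l'l]; near=> x.
by apply: lt_trans al' _; rewrite lte_fin; near: x; exact: lt_nbhsr.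
Unshelve. all: end_near.
Qed.

Lemma exprn_le_fact_expR (R : realType) (x : R) m :
  0 <= x -> x ^+ m <= m`!%:R * expR x.
Proof.
move=> x0; case: m => [|n].
  by rewrite expr0 fact0 mul1r (le_trans _ (expR_ge1Dx x)) // lerDl.
have fact_pos : 0 < n.+1`!%:R :> R by rewrite ltr0n fact_gt0.
by rewrite -ler_pdivrMl // mulrC (le_trans _ (expR_ge1Dxn n x0)) // lerDr ler01.
Qed.

Section RealSeries.
Variable R : realType.
Implicit Types u : R ^nat.

Let sum_EFin u : (fun k => \sum_(0 <= i < k) (u i)%:E)%E = EFin \o series u.
Proof. by apply/funext => k /=; rewrite sumEFin. Qed.

Lemma EFin_series_lim u : cvgn (series u) ->
  (\sum_(0 <= n <oo) (u n)%:E)%E = (limn (series u))%:E.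
Proof. by move=> cu; rewrite sum_EFin EFin_lim. Qed.

Lemma nneseries_EFin_cvg u (x : R) : (forall n, 0 <= u n) ->
  (\sum_(0 <= n <oo) (u n)%:E)%E = x%:E -> series u @ \oo --> x.
Proof.
move=> u0 ux; apply: (@fine_cvg _ _ _ _ (EFin \o series u)).
by rewrite -ux -sum_EFin; apply: is_cvg_nneseries => n _ _; rewrite lee_fin.
Qed.

End RealSeries.

Section MomentLaplace.
Variables (R : realType) (nu : {measure set R -> \bar R}).
Implicit Types (m : nat) (l t : R).

Definition moment_kernel (m : nat) (l t : R) : R := t ^+ m * expR (- (l * t)).

Definition laplace_integrable (l : R) : Prop :=
  nu.-integrable `[0%R, +oo[ (fun t => (expR (- (l * t)))%:E).

Definition moment_laplace (m : nat) (l : R) : R :=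
  \int[nu]_(t in `[0%R, +oo[) moment_kernel m l t.

Lemma moment_kernel0 l t : moment_kernel 0 l t = expR (- (l * t)).
Proof. by rewrite /moment_kernel expr0 mul1r. Qed.

Lemma moment_kernel_ge0 m l t : 0 <= t -> 0 <= moment_kernel m l t.
Proof. by move=> t0; rewrite mulr_ge0 ?exprn_ge0 ?expR_ge0. Qed.

Lemma moment_laplace_ge0 m l : 0 <= moment_laplace m l.
Proof.
by apply: Rintegral_ge0 => t; rewrite /= in_itv /= andbT; exact: moment_kernel_ge0.
Qed.

Lemma moment_kernel_nonincreasing m t : 0 <= t ->
  {homo moment_kernel m ^~ t : l l' / l <= l' >-> l' <= l}.
Proof.
move=> t0 l l' ll'.
by rewrite ler_wpM2l ?exprn_ge0 // ler_expR lerN2 ler_wpM2r.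
Qed.

Lemma measurable_moment_kernel m l :
  measurable_fun (`[0%R, +oo[ : set R) (moment_kernel m l).
Proof.
apply: measurable_funM; first exact: measurable_funX.
by apply: measurableT_comp; [exact: measurable_expR | exact: measurableT_comp].
Qed.

Lemma moment_kernel_le_expR m l (l' : R) t : l' < l -> 0 <= t ->
  moment_kernel m l t <= m`!%:R / (l - l') ^+ m * expR (- (l' * t)).
Proof.
move=> l'l t0; have d0 : 0 < l - l' by rewrite subr_gt0.
have -> : expR (- (l' * t)) = expR ((l - l') * t) * expR (- (l * t)).
  by rewrite -expRD; congr expR; ring.
rewrite /moment_kernel mulrA ler_wpM2r ?expR_ge0 // mulrAC.
rewrite ler_pdivlMr ?exprn_gt0 // mulrC -exprMn mulrC.
by apply/exprn_le_fact_expR/mulr_ge0 => //; exact: ltW.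
Qed.

Lemma integrable_moment_kernel m l (l' : R) : l' < l -> laplace_integrable l' ->
  nu.-integrable `[0%R, +oo[ (EFin \o moment_kernel m l).
Proof.
move=> l'l il'.
apply: le_integrable (integrableZl (measurable_itv _) (m`!%:R / (l - l') ^+ m) il').
- exact: measurable_itv.
- by apply/measurable_EFinP; exact: measurable_moment_kernel.
move=> t; rewrite /= in_itv /= andbT => t0.
have c0 : 0 <= m`!%:R / (l - l') ^+ m :> R.
  by rewrite divr_ge0 // exprn_ge0 // subr_ge0 ltW.
rewrite lee_fin !ger0_norm ?moment_kernel_ge0 ?(mulr_ge0 c0) ?expR_ge0 //.
exact: moment_kernel_le_expR.
Qed.

Lemma laplace_integrableW l (l' : R) : l' < l -> laplace_integrable l' ->
  laplace_integrable l.
Proof.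
move=> l'l /(integrable_moment_kernel 0 l'l).
by apply: eq_integrable => // t _; rewrite /= moment_kernel0.
Qed.

Lemma laplace_integrable_lty l :
  (\int[nu]_(t in `[0%R, +oo[) (expR (- (l * t)))%:E < +oo)%E ->
  laplace_integrable l.
Proof.
move=> fin; apply/integrableP; split.
  apply/measurable_EFinP; have := measurable_moment_kernel 0 l.
  by apply: eq_measurable_fun => t _; rewrite moment_kernel0.
by under eq_integral => t _ do rewrite abse_EFin (ger0_norm (expR_ge0 _)).
Qed.

Lemma moment_laplaceE m l (l' : R) : l' < l -> laplace_integrable l' ->
  (moment_laplace m l)%:E = (\int[nu]_(t in `[0%R, +oo[) (moment_kernel m l t)%:E)%E.
Proof.
move=> l'l il'; rewrite /moment_laplace /Rintegral fineK //.
apply: integrable_fin_num; first exact: measurable_itv.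
exact: integrable_moment_kernel l'l il'.
Qed.

Lemma is_derive_moment_kernel m t l :
  is_derive l 1 (moment_kernel m ^~ t) (- moment_kernel m.+1 l t).
Proof.
have dlinear : is_derive l 1 (fun x : R => - (x * t)) (- t).
  have -> : (fun x : R => - (x * t)) = - (t \*: id).
    by apply/funext => x /=; rewrite mulrC.
  apply: is_derive_eq (is_deriveN (is_deriveZ t (is_derive_id l 1))) _.
  by congr (- _); exact: mulr1.
have dexp := is_derive1_comp (is_derive_expR _) dlinear.
have -> : moment_kernel m ^~ t = t ^+ m \*: (expR \o (fun x : R => - (x * t))).
  by apply/funext.
apply: is_derive_eq (is_deriveZ (t ^+ m) dexp) _.
by rewrite /moment_kernel /= exprS /GRing.scale /=; ring.
Qed.

Lemma derive_moment_laplace m l (l' : R) : l' < l -> laplace_integrable l' ->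
  derivable (moment_laplace m) l 1 /\
  derive1 (moment_laplace m) l = - moment_laplace m.+1 l.
Proof.
(* Near l the derivative in l is dominated by the integrable kernel at u in (l', l). *)
move=> l'l il'; pose u := (l' + l) / 2.
have l'u : l' < u by rewrite /u; lra.
have Iu : `]u, l + 1[%classic l by rewrite /= in_itv /u /=; apply/andP; split; lra.
have int_m x : `]u, l + 1[%classic x ->
    nu.-integrable `[0%R, +oo[ (EFin \o moment_kernel m x).
  rewrite /= in_itv /= => /andP[ux _].
  exact: integrable_moment_kernel (lt_trans l'u ux) il'.
have der x t : `]u, l + 1[%classic x -> `[0%R, +oo[%classic t ->
    derivable (moment_kernel m ^~ t) x 1.
  by move=> _ _; have [] := is_derive_moment_kernel m t x.
pose bound t : R := `|moment_kernel m.+1 u t|.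
have int_bound : nu.-integrable `[0%R, +oo[ (EFin \o bound).
  apply: le_integrable (integrable_moment_kernel m.+1 l'u il') => //.
    apply/measurable_EFinP; apply: measurableT_comp => //.
    exact: measurable_moment_kernel.
  by move=> t _; rewrite /bound /= normr_id.
have dominated x t : `]u, l + 1[%classic x -> `[0%R, +oo[%classic t ->
    `|partial1of2 (moment_kernel m) x t| <= bound t.
  rewrite /= !in_itv /= andbT => /andP[ux _] t0.
  rewrite partial1of2E; have [_ ->] := is_derive_moment_kernel m t x.
  rewrite normrN /bound !ger0_norm ?moment_kernel_ge0 //.
  exact/moment_kernel_nonincreasing/ltW.
have bound_ge0 t : 0 <= bound t by exact: normr_ge0.
split.
  exact: (derivable_under_integral (mu := nu) (measurable_itv _) Iu int_m der
    bound_ge0 int_bound dominated).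
rewrite /moment_laplace (differentiation_under_integral (mu := nu) (measurable_itv _)
  Iu int_m der bound_ge0 int_bound dominated).
transitivity (\int[nu]_(t in `[0%R, +oo[) (-1 * moment_kernel m.+1 l t)).
  apply: eq_Rintegral => t _; rewrite partial1of2E.
  by have [_ ->] := is_derive_moment_kernel m t l; rewrite mulN1r.
rewrite RintegralZl ?mulN1r //.
exact: integrable_moment_kernel l'l il'.
Qed.

Lemma cvg_moment_kernel_harmonic n :
  (\int[nu]_(t in `[0%R, +oo[) (moment_kernel n (harmonic k) t)%:E)%E @[k --> \oo]
  --> (\int[nu]_(t in `[0%R, +oo[) (t ^+ n)%:E)%E.
Proof.
have kernel_cvg t : moment_kernel n (harmonic k) t @[k --> \oo] --> t ^+ n.
  rewrite -[X in _ --> X]mulr1 -expR0; apply: cvgMl_tmp.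
  have -> : 0 = - (0 * t) :> R by rewrite mul0r oppr0.
  apply: cvg_comp; last exact: continuous_expR.
  by apply: cvgN; apply: cvgMr_tmp; exact: cvg_harmonic.
have -> : (\int[nu]_(t in `[0%R, +oo[) (t ^+ n)%:E)%E =
    (\int[nu]_(t in `[0%R, +oo[) limn (fun k => (moment_kernel n (harmonic k) t)%:E))%E.
  apply: eq_integral => t _; apply/esym/cvg_lim => //.
  exact: cvg_comp (kernel_cvg t) _.
apply: cvg_monotone_convergence => //.
- by move=> k; apply/measurable_EFinP; exact: measurable_moment_kernel.
- by move=> k t; rewrite /= in_itv /= andbT => t0; rewrite lee_fin moment_kernel_ge0.
move=> t; rewrite /= in_itv /= andbT => t0 i j ij.
by rewrite lee_fin moment_kernel_nonincreasing // lef_pV2 ?posrE ?ltr0n // ler_nat ltnS.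
Qed.

Lemma integral_expR_nneseries l : l <= 0 ->
  (\int[nu]_(t in `[0%R, +oo[) (expR (- (l * t)))%:E)%E =
  (\sum_(0 <= n <oo)
     ((- l) ^+ n / n`!%:R)%:E * \int[nu]_(t in `[0%R, +oo[) (t ^+ n)%:E)%E.
Proof.
move=> l0; have c0 n : 0 <= (- l) ^+ n / n`!%:R :> R.
  by rewrite divr_ge0 ?exprn_ge0 // oppr_ge0.
transitivity (\sum_(0 <= n <oo) \int[nu]_(t in `[0%R, +oo[)
    ((- l) ^+ n / n`!%:R * t ^+ n)%:E)%E; last first.
  congr (limn _); apply/funext => k; apply: eq_bigr => n _.
  under eq_integral do rewrite EFinM.
  rewrite ge0_integralZl_EFin //.
  - by move=> t; rewrite /= in_itv /= andbT => t0; rewrite lee_fin exprn_ge0.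
  - by apply/measurable_EFinP; exact: exprn_measurable.
rewrite -integral_nneseries; last 3 first.
- exact: measurable_itv.
- by move=> n; apply/measurable_EFinP; exact: measurable_funM.
- by move=> n t; rewrite /= in_itv /= andbT => t0; rewrite lee_fin mulr_ge0 ?exprn_ge0.
apply: eq_integral => t _.
transitivity (\sum_(0 <= n <oo) (exp_coeff (- (l * t)) n)%:E)%E.
  by rewrite EFin_series_lim //; exact: is_cvg_series_exp_coeff.
congr (limn _); apply/funext => k; apply: eq_bigr => n _; congr EFin.
by rewrite /exp_coeff /= -mulNr exprMn; ring.
Qed.

Section LaplaceOnRay.
Variables (a : \bar R) (g : R -> R).
Hypothesis integrable_ray : forall l, (a < l%:E)%E -> laplace_integrable l.
Hypothesis g_ray : forall l, (a < l%:E)%E -> g l = moment_laplace 0 l.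

Let derive_moment_laplace_ray m l : (a < l%:E)%E ->
  derivable (moment_laplace m) l 1 /\
  derive1 (moment_laplace m) l = - moment_laplace m.+1 l.
Proof.
move=> /lte_EFin_dense[l' al' l'l].
exact: derive_moment_laplace l'l (integrable_ray al').
Qed.

Lemma derive1n_laplace_ray m l : (a < l%:E)%E ->
  derive1n m g l = (-1) ^+ m * moment_laplace m l.
Proof.
elim: m l => [|m IH] l al; first by rewrite /= expr0 mul1r g_ray.
have near_eq : \forall x \near l, ((-1) ^+ m \*: moment_laplace m) x = derive1n m g x.
  by apply: filterS (near_lte_EFin al) => x ax; rewrite IH.
have [dG dGE] := derive_moment_laplace_ray m al.
rewrite /= derive1E -(near_eq_derive _ near_eq) deriveZ //= -derive1E dGE exprS.
by rewrite /GRing.scale /=; ring.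
Qed.

Lemma derivable_derive1n_laplace_ray m l : (a < l%:E)%E ->
  derivable (derive1n m g) l 1.
Proof.
move=> al.
have near_eq : \forall x \near l, ((-1) ^+ m \*: moment_laplace m) x = derive1n m g x.
  by apply: filterS (near_lte_EFin al) => x ax; rewrite derive1n_laplace_ray.
apply: near_eq_derivable near_eq _.
by apply: derivableZ; have [] := derive_moment_laplace_ray m al.
Qed.

End LaplaceOnRay.
End MomentLaplace.

Section Representation.
Variables (R : realType) (f : R -> R) (nu : {measure set R -> \bar R}).
Hypothesis f_nu : represents f nu.
Implicit Types (m n : nat) (l : R).

Lemma laplace_integrable_gt0 l : 0 < l -> laplace_integrable nu l.
Proof. by move=> l0; apply: laplace_integrable_lty; rewrite -f_nu // ltry. Qed.

Lemma moment_laplace_gt0E m l : 0 < l ->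
  (moment_laplace nu m l)%:E = (\int[nu]_(t in `[0%R, +oo[) (moment_kernel m l t)%:E)%E.
Proof.
move=> l0; have l2 : l / 2 < l by lra.
by apply: moment_laplaceE l2 _; apply: laplace_integrable_gt0; lra.
Qed.

Lemma represents_moment_laplace l : 0 < l -> f l = moment_laplace nu 0 l.
Proof.
move=> l0; apply/EFin_inj; rewrite f_nu // moment_laplace_gt0E //.
by apply: eq_integral => t _; rewrite moment_kernel0.
Qed.

Lemma derive1n_represents m l : 0 < l ->
  derive1n m f l = (-1) ^+ m * moment_laplace nu m l.
Proof.
by apply: (derive1n_laplace_ray (a := 0%E)) => l'; rewrite lte_fin;
  [exact: laplace_integrable_gt0 | exact: represents_moment_laplace].
Qed.

Lemma moment_right_lim_derive1n n L : derive1n n f x @[x --> 0^'+] --> L ->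
  (\int[nu]_(t in `[0%R, +oo[) (t ^+ n)%:E)%E = ((-1) ^+ n * L)%:E.
Proof.
move=> fL; have hk k : 0 < harmonic k :> R := harmonic_gt0 k.
have fk : derive1n n f (harmonic k) @[k --> \oo] --> L.
  by move/cvg_at_rightP : fL; apply; split => //; exact: cvg_harmonic.
have Gk : moment_laplace nu n (harmonic k) @[k --> \oo] --> (-1) ^+ n * L.
  apply: cvg_trans (cvgMl_tmp (a := (-1) ^+ n) fk); apply: near_eq_cvg.
  by apply: nearW => k /=; rewrite derive1n_represents // signrMK.
have -> : (\int[nu]_(t in `[0%R, +oo[) (t ^+ n)%:E)%E =
    limn (fun k => (moment_laplace nu n (harmonic k))%:E).
  apply/esym/cvg_lim => //; have := @cvg_moment_kernel_harmonic _ nu n.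
  by apply: cvg_trans; apply: near_eq_cvg; apply: nearW => k; rewrite moment_laplace_gt0E.
by apply: cvg_lim => //; exact: cvg_comp Gk _.
Qed.

(* [Defs.] is needed below: poly's [deriv0] shadows the definition of Defs. *)
Section Taylor.
Hypothesis f_derivs0 : derivs0_finite f.

Lemma moment_deriv0E n :
  (\int[nu]_(t in `[0%R, +oo[) (t ^+ n)%:E)%E = ((-1) ^+ n * Defs.deriv0 f n)%:E.
Proof.
have [L fL] := f_derivs0 n.
by rewrite /Defs.deriv0 (cvg_lim _ fL) //; exact: moment_right_lim_derive1n.
Qed.

Lemma sign_deriv0_ge0 n : 0 <= (-1) ^+ n * Defs.deriv0 f n.
Proof.
rewrite -lee_fin -moment_deriv0E; apply: integral_ge0 => t.
by rewrite /= in_itv /= andbT lee_fin; exact: exprn_ge0.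
Qed.

Lemma taylor0_termE l n :
  taylor0_term f l n = (- l) ^+ n / n`!%:R * ((-1) ^+ n * Defs.deriv0 f n).
Proof.
rewrite /taylor0_term -[LHS](signrMK n) -[- l]mulN1r exprMn; ring.
Qed.

Lemma taylor0_term_ge0 l n : l <= 0 -> 0 <= taylor0_term f l n.
Proof.
move=> l0; rewrite taylor0_termE mulr_ge0 ?sign_deriv0_ge0 //.
by rewrite divr_ge0 ?exprn_ge0 // oppr_ge0.
Qed.

Lemma integral_expR_taylor0 l : l <= 0 ->
  (\int[nu]_(t in `[0%R, +oo[) (expR (- (l * t)))%:E)%E =
  (\sum_(0 <= n <oo) (taylor0_term f l n)%:E)%E.
Proof.
move=> l0; rewrite integral_expR_nneseries //.
congr (limn _); apply/funext => k; apply: eq_bigr => n _.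
by rewrite moment_deriv0E -EFinM taylor0_termE.
Qed.

Lemma fext_taylor0 l l' : taylor0_cvg f l' -> l' < l -> l <= 0 ->
  laplace_integrable nu l /\ fext f l = moment_laplace nu 0 l.
Proof.
move=> cvg_l' l'l l0.
have il' : laplace_integrable nu l'.
  apply: laplace_integrable_lty.
  by rewrite integral_expR_taylor0 ?EFin_series_lim ?ltry //; lra.
split; first exact: laplace_integrableW l'l il'.
rewrite /fext ifF; last by apply/negbTE; rewrite -leNgt.
apply: cvg_lim => //; apply: nneseries_EFin_cvg => [n|].
  exact: taylor0_term_ge0.
rewrite -integral_expR_taylor0 // (moment_laplaceE 0 l'l il').
by apply: eq_integral => t _; rewrite moment_kernel0.
Qed.

End Taylor.

Lemma fext_omega0 l : (omega0 f < l%:E)%E ->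
  laplace_integrable nu l /\ fext f l = moment_laplace nu 0 l.
Proof.
have fext_gt0 : 0 < l -> laplace_integrable nu l /\ fext f l = moment_laplace nu 0 l.
  move=> l0; rewrite /fext l0.
  by split; [exact: laplace_integrable_gt0 | exact: represents_moment_laplace].
rewrite /omega0; case: (pselect (derivs0_finite f)) => [fin|nfin]; last first.
  by rewrite asboolF // lte_fin => /fext_gt0.
rewrite asboolT // => /ereal_inf_lt[_ [l' cvg_l' <-]]; rewrite lte_fin => l'l.
have [l0|l0] := ltP 0 l; first exact: fext_gt0.
by apply: (fext_taylor0 fin _ l'l l0).
Qed.

End Representation.

Theorem lemma2p1 (R : realType) (f : R -> R) (nu : {measure set R -> \bar R}) :
  completely_monotone f -> represents f nu ->
  (forall m (l : R), (omega0 f < l%:E)%E -> derivable ((derive1n m (fext f))) l 1) /\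
  (forall m (l : R), (omega0 f < l%:E)%E ->
     0 <= (-1) ^+ m * (derive1n m (fext f)) l /\
     (((derive1n m (fext f)) l)%:E =
       ((-1) ^+ m)%:E * \int[nu]_(t in `[0%R, +oo[) (t ^+ m * expR (- (l * t)))%:E)%E) /\
  (forall l : R, (omega0 f < l%:E)%E ->
     (fext f l)%:E = (\int[nu]_(t in `[0%R, +oo[) (expR (- (l * t)))%:E)%E).
Proof.
move=> _ f_nu.
have int_ray l : (omega0 f < l%:E)%E -> laplace_integrable nu l.
  by move=> /(fext_omega0 f_nu)[].
have fext_ray l : (omega0 f < l%:E)%E -> fext f l = moment_laplace nu 0 l.
  by move=> /(fext_omega0 f_nu)[].
have moment_ray m l : (omega0 f < l%:E)%E ->
    (moment_laplace nu m l)%:E = (\int[nu]_(t in `[0%R, +oo[) (moment_kernel m l t)%:E)%E.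
  by move=> /lte_EFin_dense[l' /int_ray il' l'l]; exact: moment_laplaceE l'l il'.
split; first exact: derivable_derive1n_laplace_ray int_ray fext_ray.
split => [m l al|l al].
  rewrite (derive1n_laplace_ray int_ray fext_ray) // signrMK EFinM moment_ray //.
  by split; first exact: moment_laplace_ge0.
rewrite fext_ray // moment_ray //.
by apply: eq_integral => t _; rewrite moment_kernel0.
Qed.
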